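(* Every maximal non-PCG is a $2$-AND-PCG.
   Context: All trees are unrooted with edges weighted by nonnegative reals; $d_T(u,v)$ is the weight of the path between leaves $u,v$ of $T$. A graph $H$ is a PCG if there exist a tree $T$ with leaf set $V(H)$ and an interval $I$ of nonnegative reals such that $\{u,v\}\in E(H)$ iff $d_T(u,v)\in I$. A graph $G$ is a maximal non-PCG if $G$ is not a PCG but adding any single edge (between two non-adjacent vertices of $G$) yields a PCG. A graph $G=(V,E)$ is a $k$-AND-PCG if there exist $k$ PCGs $G_1,\ldots,G_k$ on vertex set $V$ with $E=\bigcap_i E(G_i)$. *)

From Stdlib Require Import Reals.
From mathcomp Require Import all_boot.
Set Implicit Arguments. Unset Strict Implicit. Unset Printing Implicit Defensive.

Definition simple_graph (V : finType) (e : rel V) : Prop :=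
  (forall u v, e u v = e v u) /\ (forall u, e u u = false).

Definition simple_path (N : finType) (adj : rel N) (x y : N) (p : seq N) : bool :=
  [&& path adj x p, last x p == y & uniq (x :: p)].

Definition is_tree (N : finType) (adj : rel N) : Prop :=
  simple_graph adj /\
  (forall x y : N, exists p, simple_path adj x y p) /\
  (forall (x y : N) p q, simple_path adj x y p -> simple_path adj x y q -> p = q).

Definition degree (N : finType) (adj : rel N) (x : N) : nat := #|[pred y | adj x y]|.

Fixpoint walk_weight (N : Type) (w : N -> N -> R) (x : N) (p : seq N) : R :=
  match p with
  | [::] => R0
  | y :: p' => Rplus (w x y) (walk_weight w y p')
  end.

Definition tree_dist (N : finType) (adj : rel N) (w : N -> N -> R) (x y : N) (r : R) : Prop :=
  exists p, simple_path adj x y p /\ walk_weight w x p = r.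

(** A weighted tree with leaf set V is given by
    a node type N, adjacency adj, edge weights w (nonnegative, symmetric on
    edges), and an injection leaf : V -> N whose image is exactly the set of
    leaves (nodes of degree <= 1) of the tree. *)
Definition is_PCG (V : finType) (e : rel V) : Prop :=
  exists (N : finType) (adj : rel N) (w : N -> N -> R) (leaf : V -> N) (dmin dmax : R),
    is_tree adj /\
    (forall x y, adj x y -> Rle R0 (w x y) /\ w x y = w y x) /\
    injective leaf /\
    (forall x : N, (degree adj x <= 1)%N <-> exists v, leaf v = x) /\
    Rle R0 dmin /\ Rle dmin dmax /\
    (forall u v : V, u != v ->
       (e u v <-> exists r, tree_dist adj w (leaf u) (leaf v) r /\ Rle dmin r /\ Rle r dmax)).

Definition add_edge (V : finType) (e : rel V) (u v : V) : rel V :=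
  [rel x y | [|| e x y, (x == u) && (y == v) | (x == v) && (y == u)]].

Definition maximal_nonPCG (V : finType) (e : rel V) : Prop :=
  simple_graph e /\ ~ is_PCG e /\
  (forall u v : V, u != v -> ~~ e u v -> is_PCG (add_edge e u v)).

Definition k_AND_PCG (k : nat) (V : finType) (e : rel V) : Prop :=
  exists G : 'I_k -> rel V,
    (forall i, simple_graph (G i) /\ is_PCG (G i)) /\
    (forall u v : V, e u v = [forall i, G i u v]).

(* If a simple graph misses at most one edge ab, it is the PCG of a star whose
   leaves a, b hang at distance 1 from the centre and all other leaves at
   distance 0, with interval [0, 1].  So a maximal non-PCG G has two distinct
   non-edges ab and cd; then G + ab and G + cd are PCGs, and G is their
   intersection. *)
From Stdlib Require Import Reals Lra Classical.
From mathcomp Require Import all_boot.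
Set Implicit Arguments. Unset Strict Implicit. Unset Printing Implicit Defensive.

Local Open Scope R_scope.

Section StarTree.
Variables (V : finType) (f : V -> R).

Definition star_adj : rel (option V) := [rel x y | (x == None) != (y == None)].

Definition star_weight (x y : option V) : R :=
  match x, y with Some u, None | None, Some u => f u | _, _ => 0 end.

Definition star_path (x y : option V) : seq (option V) :=
  if x == y then [::] else if (x != None) && (y != None) then [:: None; y] else [:: y].

Lemma star_path_simple x y : simple_path star_adj x y (star_path x y).
Proof.
rewrite /star_path /simple_path.
case: x => [x|]; case: y => [y|] //=; last by rewrite eqxx.
case: (eqVneq (Some x) (Some y)) => [->|xy] /=; first by rewrite eqxx.
by rewrite !inE !eqxx negb_or xy.
Qed.

(* A walk in the star alternates between the centre and leaves, so a simple
   path has at most two steps. *)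
Lemma star_simple_path_uniq x y p : simple_path star_adj x y p -> p = star_path x y.
Proof.
rewrite /simple_path /star_path => /and3P [xp /eqP <- xpU].
case: p xp xpU => [|z1 [|z2 [|z3 p]]] /=; first by rewrite eqxx.
- rewrite !inE andbT => xz1 /andP [/negbTE -> _].
  by case: x z1 xz1 => [x|] [z|].
- move=> /and3P [xz1 z1z2 _] /andP []; rewrite !inE.
  by case: x z1 z2 xz1 z1z2 => [x|] [z|] [t|] //= _ _ /negbTE ->.
- move=> /and4P [xz1 z1z2 z2z3 _] /and3P []; rewrite !inE.
  by case: x z1 z2 z3 xz1 z1z2 z2z3 => [x|] [z|] [t|] [s|] //=;
     rewrite ?negb_or ?eqxx ?andbF.
Qed.

Lemma star_is_tree : is_tree star_adj.
Proof.
split; first by split => [x y|x]; rewrite /star_adj /= ?eqxx // eq_sym.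
split; first by move=> x y; exists (star_path x y); apply: star_path_simple.
by move=> x y p q /star_simple_path_uniq -> /star_simple_path_uniq ->.
Qed.

Lemma star_degree_leaf u : degree star_adj (Some u) = 1%N.
Proof. by rewrite -(card1 (None : option V)); apply: eq_card => -[]. Qed.

Lemma star_degree_centre : degree star_adj None = #|V|.
Proof.
have -> : #|V| = #|{: option V}|.-1 by rewrite card_option.
by rewrite -(cardC1 (None : option V)); apply: eq_card => -[].
Qed.

Lemma star_leaf_dist u v r : u != v ->
  tree_dist star_adj star_weight (Some u) (Some v) r <-> r = f u + f v.
Proof.
move=> uv; have Suv : (Some u == Some v) = false by apply/negbTE.
have uv_path : star_path (Some u) (Some v) = [:: None; Some v] by rewrite /star_path Suv.
split => [[p [/star_simple_path_uniq -> <-]]|->]; first by rewrite uv_path /=; lra.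
exists [:: None; Some v]; split; last by rewrite /=; lra.
by rewrite -uv_path; apply: star_path_simple.
Qed.

Lemma star_PCG (e : rel V) : (1 < #|V|)%N -> (forall x, 0 <= f x) ->
  (forall u v, u != v -> e u v <-> f u + f v <= 1) -> is_PCG e.
Proof.
move=> V_gt1 f_ge0 eE.
exists (option V : finType), star_adj, star_weight, Some, 0, 1.
split; first exact: star_is_tree.
split; first by move=> [x|] [y|] //= _; split => //; apply: f_ge0.
split; first exact: Some_inj.
split.
  move=> [x|]; first by rewrite star_degree_leaf; split => // _; exists x.
  by rewrite star_degree_centre leqNgt V_gt1; split => // -[].
do 2 (split; first lra).
move=> u v uv; rewrite eE //; split => [uv_le1|[r [/(star_leaf_dist _ uv) -> []]]] //.
exists (f u + f v); rewrite star_leaf_dist //.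
by have := f_ge0 u; have := f_ge0 v; lra.
Qed.

End StarTree.

Lemma PCG_card_le1 (V : finType) (e : rel V) : (#|V| <= 1)%N -> is_PCG e.
Proof.
move=> /card_le1_eqP V_le1; have eqV (x y : V) : x = y by apply: V_le1.
exists V, [rel x y | false], (fun _ _ => 0), id, 0, 0.
split.
  split; first by [].
  split; first by move=> x y; exists [::]; rewrite /simple_path /= (eqV x y) eqxx.
  by move=> x y [|? ?] [|? ?].
do 2 (split; first by []).
split; first by move=> x; split => [_|]; [exists x | rewrite /degree eq_card0].
do 2 (split; first lra).
by move=> u v; rewrite (eqV u v) eqxx.
Qed.

Lemma PCG_of_vertex_weights (V : finType) (e : rel V) (f : V -> R) :
  (forall x, 0 <= f x) -> (forall u v, u != v -> e u v <-> f u + f v <= 1) -> is_PCG e.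
Proof.
case: (leqP #|V| 1) => [V_le1 _ _|V_gt1]; first exact: PCG_card_le1.
exact: star_PCG.
Qed.

Section UnorderedPairs.
Variable V : finType.

Definition eq_upair (a b x y : V) : bool := (x == a) && (y == b) || (x == b) && (y == a).

Lemma eq_upair_sym a b x y : eq_upair a b x y = eq_upair a b y x.
Proof. by rewrite /eq_upair orbC andbC [(y == b) && _]andbC. Qed.

Lemma eq_upair_trans a b c d x y :
  eq_upair a b x y -> eq_upair c d x y -> eq_upair a b c d.
Proof.
by rewrite /eq_upair => /orP [] /andP [/eqP -> /eqP ->] /orP [] /andP [/eqP -> /eqP ->];
  rewrite !eqxx ?orbT.
Qed.

Lemma eq_upair_in a b x y : x != y ->
  eq_upair a b x y = ((x == a) || (x == b)) && ((y == a) || (y == b)).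
Proof.
move=> xy; rewrite /eq_upair; apply/idP/idP.
  by case/orP => /andP [/eqP -> /eqP ->]; rewrite !eqxx ?orbT.
by case/andP => /orP [] /eqP xE /orP [] /eqP yE; move: xy; rewrite xE yE ?eqxx ?orbT.
Qed.

Lemma add_edgeE (e : rel V) a b x y : add_edge e a b x y = e x y || eq_upair a b x y.
Proof. by []. Qed.

Lemma add_edge_simple (e : rel V) a b :
  simple_graph e -> a != b -> simple_graph (add_edge e a b).
Proof.
move=> [e_sym e_irr] ab; split => [x y|x]; rewrite !add_edgeE.
  by rewrite e_sym eq_upair_sym.
rewrite e_irr /eq_upair /=; apply/negbTE; apply: contra ab.
by case/orP => /andP [/eqP <- /eqP <-].
Qed.

Lemma add_edge_meet (e : rel V) a b c d u v : ~~ eq_upair a b c d ->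
  e u v = add_edge e a b u v && add_edge e c d u v.
Proof.
move=> abcd; rewrite !add_edgeE; case: (e u v) => //=.
by apply/esym/negbTE; apply: contra abcd => /andP []; apply: eq_upair_trans.
Qed.

End UnorderedPairs.

Lemma complete_PCG (V : finType) (e : rel V) : (forall u v, u != v -> e u v) -> is_PCG e.
Proof.
move=> e_complete; apply: (PCG_of_vertex_weights (f := fun _ => 0)) => [x|u v uv].
  exact: Rle_refl.
by split => _; [lra | apply: e_complete].
Qed.

Lemma complete_minus_edge_PCG (V : finType) (e : rel V) a b :
  (forall u v, u != v -> e u v = ~~ eq_upair a b u v) -> is_PCG e.
Proof.
pose f x := if (x == a) || (x == b) then 1 else 0.
move=> eE; apply: (PCG_of_vertex_weights (f := f)) => [x|u v uv].
  by rewrite /f; case: ifP => _; lra.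
rewrite eE // eq_upair_in // /f.
by case: ifP => _; case: ifP => _ /=; split => // ?; lra.
Qed.

Lemma maximal_nonPCG_two_nonedges (V : finType) (e : rel V) : maximal_nonPCG e ->
  exists a b c d, [/\ a != b, ~~ e a b, c != d, ~~ e c d & ~~ eq_upair a b c d].
Proof.
move=> [[e_sym _] [e_nonPCG _]].
case: (classic (exists a b, a != b /\ ~~ e a b)) => [[a [b [ab eab]]]|no_nonedge].
  case: (classic (exists c d, [/\ c != d, ~~ e c d & ~~ eq_upair a b c d]))
    => [[c [d [cd ecd abcd]]]|one_nonedge]; first by exists a, b, c, d.
  case: e_nonPCG; apply: (complete_minus_edge_PCG (a := a) (b := b)) => u v uv.
  case: (boolP (eq_upair a b u v)) => [|not_ab].
    by case/orP => /andP [/eqP -> /eqP ->]; apply/negbTE; rewrite // e_sym.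
  by apply/negPn/negP => euv; apply: one_nonedge; exists u, v.
case: e_nonPCG; apply: complete_PCG => u v uv.
by apply/negPn/negP => euv; apply: no_nonedge; exists u, v.
Qed.

Theorem theorem11 (V : finType) (e : rel V) :
  maximal_nonPCG e -> k_AND_PCG 2 e.
Proof.
move=> e_max.
have [a [b [c [d [ab eab cd ecd abcd]]]]] := maximal_nonPCG_two_nonedges e_max.
case: e_max => [e_simple [_ e_add_PCG]].
exists (fun i : 'I_2 => if i == ord0 then add_edge e a b else add_edge e c d).
split.
  by move=> i; case: ifP => _; (split; [exact: add_edge_simple | exact: e_add_PCG]).
move=> u v; rewrite (add_edge_meet e u v abcd).
apply/andP/forallP => [[uab ucd] i|both]; first by case: ifP.
by split; [apply: (both ord0) | apply: (both ord_max)].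
Qed.
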